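(* Let $G$ be a finite simple robust graph and let $v \in V(G)$ with $d(v) \leq 6$. If $\Delta(\overline{G[N(v)]}) > 1$, then $\{v\}$ is reducible in $G$. Also, if $\overline{G[N(v)]}$ has exactly $2$ edges, then $\{v\}$ is reducible in $G$.
   Context: $\overline{H}$ is the complement of $H$. $G$ is robust if for every $u\in V(G)$, every component of $G[N(u)]$ has at least $5$ vertices. For a set $\mathcal{S}$ of triangles, an $\mathcal{S}$-edge is an edge of a triangle in $\mathcal{S}$. A nonempty set $V_0 \subseteq V(G)$ is reducible if there exist a set $\mathcal{S}$ of pairwise edge-disjoint triangles of $G$ and a set $X \subseteq E(G)$ such that (i) $|X| \leq 2|\mathcal{S}|$; (ii) $G - X$ has no triangle containing a vertex of $V_0$; (iii) $X$ contains every $\mathcal{S}$-edge whose endpoints both lie outside $V_0$. *)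

From mathcomp Require Import all_boot.
Set Implicit Arguments. Unset Strict Implicit. Unset Printing Implicit Defensive.

Definition simple_graph (T : finType) (e : rel T) : Prop :=
  symmetric e /\ irreflexive e.

Definition nbhd (T : finType) (e : rel T) (u : T) : {set T} := [set x | e u x].

Definition nbhd_rel (T : finType) (e : rel T) (u : T) : rel T :=
  [rel x y | [&& e x y, x \in nbhd e u & y \in nbhd e u]].

Definition nbhd_comp (T : finType) (e : rel T) (u x : T) : {set T} :=
  [set y | connect (nbhd_rel e u) x y].

Definition robust (T : finType) (e : rel T) : Prop :=
  forall u x, x \in nbhd e u -> 5 <= #|nbhd_comp e u x|.

Definition is_edge (T : finType) (e : rel T) (f : {set T}) : Prop :=
  exists x y, e x y /\ f = [set x; y].

Definition is_triangle (T : finType) (e : rel T) (t : {set T}) : Prop :=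
  exists a b c, [/\ e a b, e b c, e c a & t = [set a; b; c]].

Definition reducible (T : finType) (e : rel T) (V0 : {set T}) : Prop :=
  V0 != set0 /\
  exists (S : {set {set T}}) (X : {set {set T}}),
    [/\ (forall t, t \in S -> is_triangle e t) /\
        (forall t1 t2, t1 \in S -> t2 \in S -> t1 != t2 -> #|t1 :&: t2| <= 1),
        (forall f, f \in X -> is_edge e f),
        (#|X| <= 2 * #|S|),
        (forall t, is_triangle e t -> t :&: V0 != set0 ->
            exists2 f, f \in X & f \subset t) &
        (forall t f, t \in S -> is_edge e f -> f \subset t ->
            f :&: V0 = set0 -> f \in X)].

Definition co_nbhd_maxdeg_gt1 (T : finType) (e : rel T) (v : T) : Prop :=
  exists2 x, x \in nbhd e v &
    1 < #|[set y in nbhd e v | (y != x) && ~~ e x y]|.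

Definition co_nbhd_edges (T : finType) (e : rel T) (v : T) : {set {set T}} :=
  [set f : {set T} | [exists x, exists y,
     [&& x \in nbhd e v, y \in nbhd e v, x != y, ~~ e x y & f == [set x; y]]]].

From mathcomp Require Import all_boot zify.
Set Implicit Arguments. Unset Strict Implicit. Unset Printing Implicit Defensive.

(* Robustness gives every vertex of G[N(v)] a neighbour inside N(v). Label N(v) by
   0, ..., n - 1 and v by n, where n = d(v) <= 6: the hypotheses, and any witness (S, X)
   built from triangles and edges of G[{v} + N(v)], only depend on this labelled graph,
   and there are finitely many of them. For each labelled graph satisfying the hypotheses
   a witness is found by search and validated by a checker that is proved sound; the
   enumeration itself is evaluated by [vm_compute]. *)

Lemma triangle_through (T : finType) (e : rel T) (t : {set T}) (v : T) :
  symmetric e -> is_triangle e t -> v \in t ->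
  exists b c, [/\ e v b, e v c, e b c & t = [set v; b; c]].
Proof.
move=> e_sym [a [b [c [ab bc ca ->]]]]; rewrite !inE -orbA => /or3P [] /eqP ->.
- by exists b, c; split=> //; rewrite e_sym.
- exists c, a; split=> //; first by rewrite e_sym.
  by apply/setP => x; rewrite !inE; case: (x == a); case: (x == b); case: (x == c).
- exists a, b; split=> //; first by rewrite e_sym.
  by apply/setP => x; rewrite !inE; case: (x == a); case: (x == b); case: (x == c).
Qed.

Lemma card_triangle_gt1 (T : finType) (e : rel T) (t : {set T}) :
  irreflexive e -> is_triangle e t -> 1 < #|t|.
Proof.
move=> e_irr [a [b [c [ab _ _ ->]]]]; apply/card_gt1P; exists a, b.
by rewrite !inE !eqxx orbT; split=> //; apply: contraTneq ab => ->; rewrite e_irr.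
Qed.

Lemma robust_nbhd_neighbour (T : finType) (e : rel T) (u x : T) :
  robust e -> x \in nbhd e u -> exists2 y, y \in nbhd e u & e x y.
Proof.
move=> e_robust xu.
have /card_gt1P [y1 [y2 [y1x y2x y12]]] : 1 < #|nbhd_comp e u x|.
  exact: leq_trans (e_robust u x xu).
have [y yx y_ne] : exists2 y, y \in nbhd_comp e u x & y != x.
  by case: (eqVneq y1 x) => [y1E|]; [exists y2; rewrite // -y1E eq_sym | exists y1].
move: yx; rewrite inE => /connectP [[|z p] /=]; first by move=> _ yE; rewrite yE eqxx in y_ne.
by case/andP => /and3P [xz _ zu] _ _; exists z.
Qed.

Definition pairs (n : nat) : seq (nat * nat) :=
  [seq p <- [seq (i, j) | i <- iota 0 n, j <- iota 0 n] | p.1 < p.2].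

Lemma mem_pairs n i j : ((i, j) \in pairs n) = (i < j < n).
Proof.
rewrite mem_filter /=; apply/andP/andP => [[ij /allpairsP [[a b] /=]] | [ij jn]].
  by rewrite !mem_iota => -[_ bn [_ jb]]; split=> //; lia.
by split=> //; apply/allpairsP; exists (i, j); rewrite !mem_iota /=; split=> //; lia.
Qed.

Lemma pairs_uniq n : uniq (pairs n).
Proof. by rewrite filter_uniq // allpairs_uniq ?iota_uniq // => -[a b] [c d] _ _ [-> ->]. Qed.

Lemma mem_iota0 n k : (k \in iota 0 n) = (k < n).
Proof. by rewrite mem_iota. Qed.

Fixpoint sublists (T : Type) (s : seq T) : seq (seq T) :=
  if s is x :: s' then let r := sublists s' in r ++ map (cons x) r else [:: [::]].

Lemma filter_in_sublists (T : eqType) (a : pred T) (s : seq T) : filter a s \in sublists s.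
Proof.
elim: s => [|x s IH] //=; rewrite mem_cat.
by case: (a x); [rewrite map_f ?orbT | rewrite IH].
Qed.

(* Adjacency of G[{v} + N(v)] when v is labelled n and [E] lists the edges (i, j),
   i < j < n, of G[N(v)]. *)
Definition adj (n : nat) (E : seq (nat * nat)) (i j : nat) : bool :=
  if i == n then j < n else if j == n then i < n else (minn i j, maxn i j) \in E.

(* Evaluating [tabulate n g] computes [g] once on [0, n]^2; later calls are lookups. *)
Definition tabulate (n : nat) (g : nat -> nat -> bool) : nat -> nat -> bool :=
  let rows := [seq [seq g i j | j <- iota 0 n.+1] | i <- iota 0 n.+1] in
  fun i j => nth false (nth [::] rows i) j.

Lemma tabulateE n g i j : i <= n -> j <= n -> tabulate n g i j = g i j.
Proof.
move=> i_le j_le; rewrite /tabulate (nth_map 0) ?size_iota // nth_iota //.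
by rewrite (nth_map 0) ?size_iota // nth_iota.
Qed.

Definition no_isolated n (g : nat -> nat -> bool) :=
  all (fun i => has (g i) (iota 0 n)) (iota 0 n).

Definition co_deg_gt1 n (g : nat -> nat -> bool) :=
  has (fun i => 1 < count (fun j => (j != i) && ~~ g i j) (iota 0 n)) (iota 0 n).

Definition co_edges n (g : nat -> nat -> bool) := [seq p <- pairs n | ~~ g p.1 p.2].

Lemma mem_co_edges n g i j : ((i, j) \in co_edges n g) = ~~ g i j && (i < j < n).
Proof. by rewrite mem_filter mem_pairs. Qed.

Definition premise n g := no_isolated n g && (co_deg_gt1 n g || (size (co_edges n g) == 2)).

Definition cert := (seq (seq nat) * seq (seq nat))%type.

Definition label_triangle n (g : nat -> nat -> bool) (t : seq nat) :=
  all (leq^~ n) t && if t is [:: a; b; c] then [&& g a b, g b c & g c a] else false.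

Definition label_edge n (g : nat -> nat -> bool) (p : seq nat) :=
  all (leq^~ n) p && if p is [:: a; b] then g a b else false.

Definition covers_nbhd_edges n (g : nat -> nat -> bool) (Es : seq (seq nat)) :=
  all2rel (fun i j => ~~ g i j || has (fun p : seq nat => all (mem [:: n; i; j]) p) Es)
    (iota 0 n).

Definition contains_inner_edges n (Es : seq (seq nat)) (t : seq nat) :=
  all2rel (fun i j => [|| i == j, i == n, j == n, [:: i; j] \in Es | [:: j; i] \in Es]) t.

Definition valid_cert n g (c : cert) :=
  let: (Ts, Es) := c in
  [&& all (label_triangle n g) Ts, uniq Ts,
      all2rel (fun t1 t2 : seq nat => (t1 == t2) || (count (mem t2) t1 <= 1)) Ts,
      all (label_edge n g) Es, size Es <= 2 * size Ts,
      covers_nbhd_edges n g Es & all (contains_inner_edges n Es) Ts].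

Section Labelling.

Variables (T : finType) (e : rel T) (v : T) (n : nat) (f : nat -> T) (g : nat -> nat -> bool).
Hypothesis e_sym : symmetric e.
Hypothesis e_irr : irreflexive e.
Hypothesis f_inj : {in [pred i | i <= n] &, injective f}.
Hypothesis f_n : f n = v.
Hypothesis f_nbhd : forall i, i < n -> e v (f i).
Hypothesis nbhd_f : forall x, e v x -> exists2 i, i < n & f i = x.
Hypothesis g_e : forall i j, i <= n -> j <= n -> g i j = e (f i) (f j).

Definition vset (t : seq nat) : {set T} := [set x in map f t].

Lemma vset3 a b c : vset [:: a; b; c] = [set f a; f b; f c].
Proof. by apply/setP => x; rewrite !inE orbA. Qed.

Lemma vset2 a b : vset [:: a; b] = [set f a; f b].
Proof. by apply/setP => x; rewrite !inE. Qed.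

Lemma vset_sub t1 t2 : all (mem t2) t1 -> vset t1 \subset vset t2.
Proof.
move=> /allP t12; apply/subsetP => x; rewrite !inE => /mapP [k k1 ->].
exact/map_f/t12.
Qed.

Lemma vsetI t1 t2 : all (leq^~ n) t1 -> all (leq^~ n) t2 ->
  vset t1 :&: vset t2 = vset [seq k <- t1 | k \in t2].
Proof.
move=> /allP t1n /allP t2n; apply/setP => x; rewrite !inE.
apply/andP/mapP => [[/mapP [i i1 ->] /mapP [j j2 fij]] | [i]].
  by exists i => //; rewrite mem_filter i1 (f_inj (t1n _ i1) (t2n _ j2) fij) j2.
by rewrite mem_filter => /andP [i2 i1] ->; rewrite !map_f.
Qed.

Lemma card_vsetI t1 t2 : all (leq^~ n) t1 -> all (leq^~ n) t2 ->
  #|vset t1 :&: vset t2| <= count (mem t2) t1.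
Proof.
move=> t1n t2n; rewrite vsetI // cardsE -size_filter.
by apply: leq_trans (card_size _) _; rewrite size_map.
Qed.

Lemma label_triangleP t : label_triangle n g t -> is_triangle e (vset t).
Proof.
rewrite /label_triangle; case: t => [|a [|b [|c [|? ?]]]] /=; rewrite ?andbF //.
case/andP => /and4P [an bn cn _] /and3P [ab bc ca].
by exists (f a), (f b), (f c); rewrite -!g_e ?vset3.
Qed.

Lemma label_edgeP p : label_edge n g p -> is_edge e (vset p).
Proof.
rewrite /label_edge; case: p => [|a [|b [|? ?]]] /=; rewrite ?andbF //.
case/andP => /and3P [an bn _] ab.
by exists (f a), (f b); rewrite -g_e ?vset2.
Qed.

Lemma vsets_hit_triangles_at_v Es : covers_nbhd_edges n g Es ->
  forall t, is_triangle e t -> t :&: [set v] != set0 ->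
  exists2 u, u \in [set u in map vset Es] & u \subset t.
Proof.
move=> /allrelP Es_cover t t_tri /set0Pn [x]; rewrite !inE => /andP [xt /eqP xv]; subst x.
have [b [c [vb vc bc ->]]] := triangle_through e_sym t_tri xt.
have [[i i_lt fi] [j j_lt fj]] := (nbhd_f vb, nbhd_f vc); subst b c.
have := Es_cover i j; rewrite !mem_iota0 g_e ?(ltnW i_lt) ?(ltnW j_lt) // bc.
move=> /(_ i_lt j_lt) /hasP [p pE p_sub]; exists (vset p); first by rewrite inE map_f.
by rewrite -f_n -vset3; apply: vset_sub.
Qed.

Lemma vsets_contain_edges_off_v s Es : contains_inner_edges n Es s ->
  forall u, is_edge e u -> u \subset vset s -> u :&: [set v] = set0 ->
  u \in [set u in map vset Es].
Proof.
move=> /allrelP s_Es u [x [y [xy ->]]] xy_sub xy_v.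
have v_out : v \notin [set x; y].
  apply/negP => vxy; suff : v \in [set x; y] :&: [set v] by rewrite xy_v inE.
  by rewrite inE vxy set11.
have [xs ys] : x \in vset s /\ y \in vset s.
  by split; apply: (subsetP xy_sub); rewrite !inE eqxx ?orbT.
move: xs ys xy v_out; rewrite !inE => /mapP [i i_s ->] /mapP [j j_s ->] fij v_out.
have [i_n j_n] : i != n /\ j != n.
  by split; apply: contraNneq v_out => kn; rewrite -f_n -kn eqxx ?orbT.
have i_j : i != j by apply: contraTneq fij => ->; rewrite e_irr.
move: (s_Es i j i_s j_s); rewrite (negbTE i_j) (negbTE i_n) (negbTE j_n) /=.
case/orP => ij_Es; apply/mapP; first by exists [:: i; j]; rewrite ?vset2.
by exists [:: j; i]; rewrite ?vset2 // setUC.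
Qed.

Lemma valid_cert_reducible c : valid_cert n g c -> reducible e [set v].
Proof.
case: c => Ts Es /and5P [Ttri Tuniq /allrelP Tshare Eedge].
case/and3P => [Esize Ecover /allP Tedges].
have Tn t : t \in Ts -> all (leq^~ n) t by move=> /(allP Ttri) /andP [].
have vset_inj : {in Ts &, injective vset}.
  move=> t1 t2 t1T t2T vset12; have /orP [/eqP // | share] := Tshare _ _ t1T t2T.
  have := card_triangle_gt1 e_irr (label_triangleP (allP Ttri _ t1T)).
  by rewrite -[vset t1]setIid {2}vset12 ltnNge (leq_trans (card_vsetI _ _) share) ?Tn.
split; first by apply/set0Pn; exists v; rewrite inE.
exists [set u in map vset Ts], [set u in map vset Es]; split.
- split=> [u | u1 u2]; rewrite !inE.
    by case/mapP => t /(allP Ttri) /label_triangleP ? ->.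
  case/mapP => t1 t1T -> /mapP [t2 t2T ->] t12.
  apply: leq_trans (card_vsetI (Tn _ t1T) (Tn _ t2T)) _.
  by have /orP [/eqP t12' | //] := Tshare _ _ t1T t2T; rewrite t12' eqxx in t12.
- by move=> u; rewrite inE => /mapP [p /(allP Eedge) /label_edgeP ? ->].
- have /card_uniqP card_Ts : uniq (map vset Ts) by rewrite map_inj_in_uniq.
  rewrite !cardsE card_Ts size_map; apply: leq_trans Esize.
  by rewrite -(size_map vset); apply: card_size.
- exact: vsets_hit_triangles_at_v Ecover.
- by move=> t u; rewrite inE => /mapP [s /Tedges s_Es ->]; apply: vsets_contain_edges_off_v.
Qed.

Lemma f_inj_lt : {in iota 0 n &, injective f}.
Proof. by move=> i j /[!mem_iota0] i_lt j_lt; apply: f_inj; rewrite inE ltnW. Qed.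

Lemma card_nbhd_labels (P : pred T) :
  #|[set y in nbhd e v | P y]| = count (fun i => P (f i)) (iota 0 n).
Proof.
have -> : [set y in nbhd e v | P y] = [set y in map f [seq i <- iota 0 n | P (f i)]].
  apply/setP => y; rewrite !inE; apply/andP/mapP => [[/nbhd_f [i i_lt <-] Pfi] | [i]].
    by exists i; rewrite // mem_filter Pfi mem_iota0.
  by rewrite mem_filter mem_iota0 => /andP [Pfi /f_nbhd fi_v] ->.
rewrite cardsE (card_uniqP _) ?size_map ?size_filter //.
rewrite map_inj_in_uniq ?filter_uniq ?iota_uniq // => i j.
by rewrite !mem_filter => /andP [_ i_lt] /andP [_ j_lt]; apply: f_inj_lt.
Qed.

Lemma co_deg_gt1_labels : co_nbhd_maxdeg_gt1 e v -> co_deg_gt1 n g.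
Proof.
case=> x /[!inE] /nbhd_f [i i_lt <-]; rewrite card_nbhd_labels => deg.
apply/hasP; exists i; first by rewrite mem_iota0.
congr (1 < _): deg; apply: eq_in_count => j /[!mem_iota0] j_lt /=.
by rewrite (inj_in_eq f_inj_lt) ?mem_iota0 // g_e ?(ltnW i_lt) ?(ltnW j_lt).
Qed.

Lemma doubleton_labels_inj : {in co_edges n g &, injective (fun p => [set f p.1; f p.2])}.
Proof.
move=> [i j] [k l] /[!mem_co_edges] /andP [_ /andP [ij jn]] /andP [_ /andP [kl ln]] /= ijkl.
have mem2 a : a < n -> f a \in [set f k; f l] -> (a == k) || (a == l).
  by move=> a_lt; rewrite !inE !(inj_in_eq f_inj_lt) ?mem_iota0 // (ltn_trans kl ln).
have := mem2 i (ltn_trans ij jn); have := mem2 j jn.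
rewrite -ijkl !inE !eqxx orbT => /(_ isT) j_kl /(_ isT) i_kl.
by apply/eqP; rewrite xpair_eqE; apply/andP; split; apply/eqP; lia.
Qed.

Lemma co_nbhd_edgesE :
  co_nbhd_edges e v = [set u in map (fun p => [set f p.1; f p.2]) (co_edges n g)].
Proof.
apply/setP => u; rewrite !inE; apply/existsP/mapP => [[x /existsP [y]] | [[i j]]].
  rewrite !inE => /and5P [vx vy xy nxy /eqP ->].
  have [[i i_lt fi] [j j_lt fj]] := (nbhd_f vx, nbhd_f vy); subst x y; clear vx vy.
  wlog ij : i j i_lt j_lt xy nxy / i < j.
    move=> wlog_ij; case: (ltngtP i j) => [| ji | ij]; first exact: wlog_ij.
      by rewrite setUC; apply: wlog_ij; rewrite // 1?eq_sym // e_sym.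
    by rewrite ij eqxx in xy.
  exists (i, j) => //.
  by rewrite mem_co_edges g_e ?(ltnW i_lt) ?(ltnW j_lt) // nxy ij j_lt.
rewrite mem_co_edges => /and3P [nij ij j_lt] ->; exists (f i); apply/existsP; exists (f j).
have i_lt := ltn_trans ij j_lt.
rewrite !inE !f_nbhd // (inj_in_eq f_inj_lt) ?mem_iota0 // neq_ltn ij eqxx.
by rewrite -g_e ?(ltnW i_lt) ?(ltnW j_lt) // nij.
Qed.

Lemma card_co_nbhd_edges : #|co_nbhd_edges e v| = size (co_edges n g).
Proof.
rewrite co_nbhd_edgesE cardsE (card_uniqP _) ?size_map //.
by rewrite (map_inj_in_uniq doubleton_labels_inj) filter_uniq ?pairs_uniq.
Qed.

Lemma premise_labels :
  robust e -> co_nbhd_maxdeg_gt1 e v \/ #|co_nbhd_edges e v| = 2 -> premise n g.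
Proof.
move=> e_robust hyp_v; apply/andP; split.
  apply/allP => i /[!mem_iota0] i_lt.
  have fi_v : f i \in nbhd e v by rewrite inE f_nbhd.
  have [y /[!inE] /nbhd_f [j j_lt <-] fij] := robust_nbhd_neighbour e_robust fi_v.
  by apply/hasP; exists j; rewrite ?mem_iota0 // g_e ?(ltnW i_lt) ?(ltnW j_lt).
case: hyp_v => [/co_deg_gt1_labels -> // | co2].
by rewrite -card_co_nbhd_edges co2 orbT.
Qed.

Lemma adj_labels i j : i <= n -> j <= n ->
  adj n [seq p <- pairs n | e (f p.1) (f p.2)] i j = e (f i) (f j).
Proof.
move=> i_le j_le; rewrite /adj.
have lt_or_n k : k <= n -> k != n -> k < n by rewrite ltn_neqAle => -> ->.
case: eqP => [-> | /eqP i_n].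
  rewrite f_n; have [j_lt | j_ge] := ltnP j n; first by rewrite f_nbhd.
  by rewrite (eqP (_ : j == n)) ?f_n ?e_irr // eqn_leq j_le.
case: eqP => [-> | /eqP j_n].
  rewrite f_n lt_or_n // e_sym f_nbhd //; exact: lt_or_n.
rewrite mem_filter mem_pairs.
case: (ltngtP i j) => [ij | ji | ->] /=; last by rewrite ltnn e_irr andbF.
  by rewrite ij lt_or_n ?andbT.
by rewrite ji lt_or_n ?andbT 1?e_sym.
Qed.

End Labelling.

Fixpoint first_some (A B : Type) (h : A -> option B) (s : seq A) : option B :=
  if s is x :: s' then if h x is Some y then Some y else first_some h s' else None.

Fixpoint matchings (s : seq (seq nat)) : seq (seq (seq nat)) :=
  if s is p :: s' then
    let r := matchings s' in r ++ [seq p :: m | m <- r & all (fun q => ~~ has (mem q) p) m]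
  else [:: [::]].

Definition tri_edges (t : seq nat) : seq (seq nat) :=
  if t is [:: a; b; c] then [:: [:: a; b]; [:: b; c]; [:: a; c]] else [::].

(* Given a matching M of G[N(v)], a set Q of edge-disjoint triangles of G[N(v)] sharing no
   edge with M, a set C of neighbours of v and the set F of edges of G[N(v)] neither in M
   nor in a triangle of Q nor incident to C, take S = {vxy : xy in M} + Q and
   X = M + {vc : c in C} + F + E(Q); then |X| <= 2|S| amounts to |C| + |F| + |Q| <= |M|. *)
Definition cert_of n (M Q : seq (seq nat)) (C : seq nat) (F : seq (seq nat)) : cert :=
  ([seq n :: p | p <- M] ++ Q,
   M ++ [seq [:: n; c] | c <- C] ++ F ++ flatten (map tri_edges Q)).

Definition search n g : option cert :=
  let I := iota 0 n in
  let E := [seq [:: p.1; p.2] | p <- pairs n & g p.1 p.2] in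
  let tris := [seq t <- [seq rcons p k | p <- E, k <- I] | sorted ltn t && label_triangle n g t] in
  let Qs := [::] :: [seq [:: t] | t <- tris] ++
    [seq Q <- [seq [:: t1; t2] | t1 <- tris, t2 <- tris] |
      if Q is [:: t1; t2] then ~~ has (mem (tri_edges t2)) (tri_edges t1) else false] in
  first_some (fun M =>
    first_some (fun Q =>
      let QE := flatten (map tri_edges Q) in
      if has (mem M) QE then None else
      let R := [seq p <- E | (p \notin M) && (p \notin QE)] in
      first_some (fun C =>
        if size M < size C + size Q then None else
        let F := [seq p <- R | ~~ has (mem C) p] in
        if size C + size F + size Q <= size M then Some (cert_of n M Q C F) else None)
      (sublists I)) Qs)
  (sort (fun M1 M2 => size M2 <= size M1) (matchings E)).

Definition settled n g :=
  if premise n g then if search n g is Some c then valid_cert n g c else false else true.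

Definition all_settled :=
  all (fun n => all (fun E => settled n (tabulate n (adj n E))) (sublists (pairs n))) (iota 0 7).

Lemma all_settled_true : all_settled.
Proof. vm_cast_no_check (erefl true). Qed.

Section NbhdLabelling.

Variables (T : finType) (e : rel T) (v : T).
Hypothesis e_irr : irreflexive e.

Definition nbhd_label : nat -> T := nth v (enum (nbhd e v)).

Lemma nbhd_label_inj : {in [pred i | i <= #|nbhd e v|] &, injective nbhd_label}.
Proof.
have uniq_lab : uniq (rcons (enum (nbhd e v)) v).
  by rewrite rcons_uniq mem_enum inE e_irr enum_uniq.
move=> i j /[!inE] i_le j_le /eqP.
rewrite /nbhd_label -(nth_rcons_default v _ i) -(nth_rcons_default v _ j).
by rewrite nth_uniq ?size_rcons -?cardE ?ltnS // => /eqP.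
Qed.

Lemma nbhd_label_last : nbhd_label #|nbhd e v| = v.
Proof. by rewrite /nbhd_label nth_default // cardE. Qed.

Lemma nbhd_label_nbhd i : i < #|nbhd e v| -> e v (nbhd_label i).
Proof. by rewrite cardE => i_lt; have := mem_nth v i_lt; rewrite mem_enum inE. Qed.

Lemma nbhd_labelP x : e v x -> exists2 i, i < #|nbhd e v| & nbhd_label i = x.
Proof.
have x_enum : e v x -> x \in enum (nbhd e v) by rewrite mem_enum inE.
move=> /x_enum x_in; exists (index x (enum (nbhd e v))).
  by rewrite cardE index_mem.
by rewrite /nbhd_label nth_index.
Qed.

End NbhdLabelling.

Theorem proposition5p1 (T : finType) (e : rel T) (v : T) :
  simple_graph e -> robust e -> #|nbhd e v| <= 6 ->
  (co_nbhd_maxdeg_gt1 e v -> reducible e [set v]) /\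
  (#|co_nbhd_edges e v| = 2 -> reducible e [set v]).
Proof.
move=> [e_sym e_irr] e_robust deg_v.
suff reducible_v : co_nbhd_maxdeg_gt1 e v \/ #|co_nbhd_edges e v| = 2 -> reducible e [set v].
  by split=> hyp_v; apply: reducible_v; [left | right].
move=> hyp_v; set n := #|nbhd e v|; set f := nbhd_label e v.
set E := [seq p <- pairs n | e (f p.1) (f p.2)]; set g := tabulate n (adj n E).
have f_inj := nbhd_label_inj e_irr (v := v).
have f_n := nbhd_label_last e v.
have f_nbhd := nbhd_label_nbhd (e := e) (v := v).
have nbhd_f := nbhd_labelP (e := e) (v := v).
have g_e i j : i <= n -> j <= n -> g i j = e (f i) (f j).
  by move=> i_le j_le; rewrite /g tabulateE // (adj_labels e_sym e_irr f_n f_nbhd).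
have : settled n g.
  have /allP /(_ n) := all_settled_true; rewrite mem_iota0 ltnS => /(_ deg_v) /allP; apply.
  exact: filter_in_sublists.
rewrite /settled (premise_labels e_sym f_inj f_nbhd nbhd_f g_e e_robust hyp_v).
case: (search n g) => // c.
exact: (valid_cert_reducible e_sym e_irr f_inj f_n nbhd_f g_e).
Qed.
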